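(* Let $\mathfrak g\xrightarrow{\mu}\mathfrak h$ be a crossed module of Lie algebras and let $\mathfrak e_1\xrightarrow{\epsilon}\mathfrak e_0$ (with action $\mathcal L^\epsilon$), together with crossed module morphisms $(j_1,j_0):(W\xrightarrow{\phi}V)\to(\mathfrak e_1\to\mathfrak e_0)$ and $(\pi_1,\pi_0):(\mathfrak e_1\to\mathfrak e_0)\to(\mathfrak g\to\mathfrak h)$, be a 2-extension of $\mathfrak g\xrightarrow{\mu}\mathfrak h$ by $W\xrightarrow{\phi}V$. Identify $W\subseteq\mathfrak e_1$ and $V\subseteq\mathfrak e_0$ via $j_1,j_0$, and let $\sigma_0:\mathfrak h\to\mathfrak e_0$, $\sigma_1:\mathfrak g\to\mathfrak e_1$ be linear maps with $\pi_0\sigma_0=\mathrm{id}$, $\pi_1\sigma_1=\mathrm{id}$. Then the maps $$\rho_0^0(y)v=[\sigma_0(y),v]_{\mathfrak e_0},\qquad\rho_0^1(y)w=\mathcal L^\epsilon_{\sigma_0(y)}w,\qquad\rho_1(x)v=-\mathcal L^\epsilon_v\sigma_1(x)$$ ($y\in\mathfrak h$, $v\in V$, $w\in W$, $x\in\mathfrak g$) take values in $V$, $W$, $W$ respectively and define a 2-representation of $\mathfrak g\xrightarrow{\mu}\mathfrak h$ on $W\xrightarrow{\phi}V$.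
   Context: A crossed module of Lie algebras consists of Lie algebras $\mathfrak g,\mathfrak h$, a Lie algebra homomorphism $\mu:\mathfrak g\to\mathfrak h$ and a Lie algebra homomorphism $\mathcal L:\mathfrak h\to\mathrm{Der}(\mathfrak g)$ with $\mu(\mathcal L_yx)=[y,\mu(x)]$ and $\mathcal L_{\mu(x_0)}x_1=[x_0,x_1]$. A morphism of crossed modules is a pair of Lie algebra homomorphisms $(f_1,f_0)$ commuting with the structure maps and satisfying $f_1(\mathcal L_yx)=\mathcal L'_{f_0(y)}f_1(x)$. A linear map $\phi:W\to V$ is regarded as a crossed module with abelian brackets and zero action. A 2-extension of $\mathfrak g\xrightarrow{\mu}\mathfrak h$ by $W\xrightarrow{\phi}V$ is a crossed module $\mathfrak e_1\xrightarrow{\epsilon}\mathfrak e_0$ with morphisms $(j_1,j_0)$, $(\pi_1,\pi_0)$ as in the claim such that $0\to W\xrightarrow{j_1}\mathfrak e_1\xrightarrow{\pi_1}\mathfrak g\to0$ and $0\to V\xrightarrow{j_0}\mathfrak e_0\xrightarrow{\pi_0}\mathfrak h\to0$ are exact. A 2-representation on $\phi$: linear maps $\rho_0^1:\mathfrak h\to\mathfrak{gl}(W)$, $\rho_0^0:\mathfrak h\to\mathfrak{gl}(V)$, $\rho_1:\mathfrak g\to\mathrm{Hom}(V,W)$ with $\rho_0^1,\rho_0^0$ Lie algebra representations, $\phi\rho_0^1(y)=\rho_0^0(y)\phi$, $\rho_1([x_0,x_1])=\rho_1(x_0)\phi\rho_1(x_1)-\rho_1(x_1)\phi\rho_1(x_0)$,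 $\rho_0^0(\mu(x))=\phi\rho_1(x)$, $\rho_0^1(\mu(x))=\rho_1(x)\phi$, $\rho_1(\mathcal L_yx)=\rho_0^1(y)\rho_1(x)-\rho_1(x)\rho_0^0(y)$. *)

From HB Require Import structures.
From mathcomp Require Import all_boot all_order all_algebra.
Set Implicit Arguments. Unset Strict Implicit. Unset Printing Implicit Defensive.
Import GRing.Theory.
Local Open Scope ring_scope.

Section LieDefs.
Variable K : fieldType.

Definition lin (A B : lmodType K) (f : A -> B) : Prop :=
  forall (a : K) (x y : A), f (a *: x + y) = a *: f x + f y.

Definition lin2 (C A B : lmodType K) (f : C -> A -> B) : Prop :=
  (forall c, lin (f c)) /\
  (forall (a : K) (c1 c2 : C) (x : A), f (a *: c1 + c2) x = a *: f c1 x + f c2 x).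

Definition is_lie (A : lmodType K) (br : A -> A -> A) : Prop :=
  lin2 br /\ (forall x, br x x = 0) /\
  (forall x y z, br x (br y z) + br y (br z x) + br z (br x y) = 0).

Definition lie_hom (A B : lmodType K) (brA : A -> A -> A) (brB : B -> B -> B)
  (f : A -> B) : Prop :=
  lin f /\ forall x y, f (brA x y) = brB (f x) (f y).

Definition is_crossed_module (G H : lmodType K)
  (brg : G -> G -> G) (brh : H -> H -> H) (mu : G -> H) (L : H -> G -> G) : Prop :=
  [/\ is_lie brg, is_lie brh, lie_hom brg brh mu &
   [/\ 
      (lin2 L /\
      (forall y x1 x2, L y (brg x1 x2) = brg (L y x1) x2 + brg x1 (L y x2)) /\
      (forall y1 y2 x, L (brh y1 y2) x = L y1 (L y2 x) - L y2 (L y1 x))),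
      (forall y x, mu (L y x) = brh y (mu x)) &
      (forall x0 x1, L (mu x0) x1 = brg x0 x1)]].

Definition cm_morphism (G H G' H' : lmodType K)
  (brg : G -> G -> G) (brh : H -> H -> H) (mu : G -> H) (L : H -> G -> G)
  (brg' : G' -> G' -> G') (brh' : H' -> H' -> H') (mu' : G' -> H') (L' : H' -> G' -> G')
  (f1 : G -> G') (f0 : H -> H') : Prop :=
  [/\ lie_hom brg brg' f1, lie_hom brh brh' f0,
      (forall x, mu' (f1 x) = f0 (mu x)) &
      (forall y x, f1 (L y x) = L' (f0 y) (f1 x))].

(* abelian bracket and zero action: a linear map as a crossed module *)
Definition abr (A : lmodType K) : A -> A -> A := fun _ _ => 0.
Definition zact (A B : lmodType K) : A -> B -> B := fun _ _ => 0.

Definition short_exact (A E B : lmodType K) (j : A -> E) (p : E -> B) : Prop :=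
  [/\ injective j, (forall b, exists e, p e = b) &
      (forall e, p e = 0 <-> exists a, e = j a)].

Definition two_extension (G H W V E1 E0 : lmodType K)
  (brg : G -> G -> G) (brh : H -> H -> H) (mu : G -> H) (L : H -> G -> G)
  (phi : W -> V)
  (bre1 : E1 -> E1 -> E1) (bre0 : E0 -> E0 -> E0) (eps : E1 -> E0)
  (Le : E0 -> E1 -> E1)
  (j1 : W -> E1) (j0 : V -> E0) (pi1 : E1 -> G) (pi0 : E0 -> H) : Prop :=
  [/\ lin phi, is_crossed_module bre1 bre0 eps Le &
   [/\ 
      cm_morphism (@abr W) (@abr V) phi (@zact V W) bre1 bre0 eps Le j1 j0,
      cm_morphism bre1 bre0 eps Le brg brh mu L pi1 pi0,
      short_exact j1 pi1 & short_exact j0 pi0]].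

Definition two_representation (G H W V : lmodType K)
  (brg : G -> G -> G) (brh : H -> H -> H) (mu : G -> H) (L : H -> G -> G)
  (phi : W -> V)
  (rho01 : H -> W -> W) (rho00 : H -> V -> V) (rho1 : G -> V -> W) : Prop :=
  [/\ (lin2 rho01 /\ (forall y1 y2 w,
         rho01 (brh y1 y2) w = rho01 y1 (rho01 y2 w) - rho01 y2 (rho01 y1 w))),
      (lin2 rho00 /\ (forall y1 y2 v,
         rho00 (brh y1 y2) v = rho00 y1 (rho00 y2 v) - rho00 y2 (rho00 y1 v))),
      lin2 rho1,
      (forall y w, phi (rho01 y w) = rho00 y (phi w)) &
  [/\ 
(forall x0 x1 v, rho1 (brg x0 x1) v =
          rho1 x0 (phi (rho1 x1 v)) - rho1 x1 (phi (rho1 x0 v))),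
      (forall x v, rho00 (mu x) v = phi (rho1 x v)),
      (forall x w, rho01 (mu x) w = rho1 x (phi w)) &
      (forall y x v, rho1 (L y x) v = rho01 y (rho1 x v) - rho1 x (rho00 y v))]].

End LieDefs.

From mathcomp Require Import all_boot all_order all_algebra.
Import GRing.Theory.
Local Open Scope ring_scope.

Set Implicit Arguments.
Unset Strict Implicit.
Unset Printing Implicit Defensive.

(* V and W are ideals (the kernels of pi0, pi1), V is abelian and acts
   trivially on W.  Hence [a, v], L_a w and L_v e depend only on pi0 a and
   pi1 e, so the failure of the sections s0, s1 to preserve brackets, mu
   and L (a defect lying in V or W) is invisible.  Each axiom of a
   2-representation thus reduces to an identity of the crossed module
   e1 -> e0: Jacobi, L^eps being a derivation and a homomorphism, and the
   two Peiffer identities. *)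

Section Basics.
Variable K : fieldType.

Lemma linD (A B : lmodType K) (f : A -> B) x y : lin f -> f (x + y) = f x + f y.
Proof. by move=> hf; have := hf 1 x y; rewrite !scale1r. Qed.

Lemma lin0 (A B : lmodType K) (f : A -> B) : lin f -> f 0 = 0.
Proof. by move=> hf; apply: (addrI (f 0)); rewrite -(linD _ _ hf) !addr0. Qed.

Lemma linN (A B : lmodType K) (f : A -> B) x : lin f -> f (- x) = - f x.
Proof.
by move=> hf; apply: (addIr (f x)); rewrite -(linD _ _ hf) !addNr (lin0 hf).
Qed.

Lemma linB (A B : lmodType K) (f : A -> B) x y : lin f -> f (x - y) = f x - f y.
Proof. by move=> hf; rewrite (linD _ _ hf) (linN _ hf). Qed.

Lemma lin2l (C A B : lmodType K) (f : C -> A -> B) x : lin2 f -> lin (f^~ x).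
Proof. by case=> _ hf a c1 c2; apply: hf. Qed.

Lemma lie_anti (A : lmodType K) (br : A -> A -> A) a b :
  is_lie br -> br a b = - br b a.
Proof.
case=> hbr [halt _]; apply/eqP; rewrite -addr_eq0; apply/eqP.
have := halt (a + b).
rewrite (linD _ _ (hbr.1 _)) !(linD _ _ (lin2l _ hbr)) !halt.
by rewrite add0r addr0 addrC.
Qed.

Lemma lie_jacobi (A : lmodType K) (br : A -> A -> A) a b c :
  is_lie br -> br (br a b) c = br a (br b c) - br b (br a c).
Proof.
move=> hlie; have /eqP := hlie.2.2 a b c.
rewrite addrC addr_eq0 => /eqP hjac.
by rewrite lie_anti // hjac opprK (lie_anti c a) // (linN _ (hlie.1.1 b)).
Qed.

Lemma short_exact_comp (A E B : lmodType K) (j : A -> E) (p : E -> B) a :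
  short_exact j p -> p (j a) = 0.
Proof. by case=> _ _ /(_ (j a)) [_ ->]; last exists a. Qed.

Lemma short_exact_ker (A E B : lmodType K) (j : A -> E) (p : E -> B) e :
  short_exact j p -> p e = 0 -> exists a, e = j a.
Proof. by case=> _ _ /(_ e) []. Qed.

Lemma short_exact_fiber (A E B X : lmodType K) (j : A -> E) (p : E -> B)
    (f : E -> X) e e' :
  short_exact j p -> lin p -> lin f -> (forall a, f (j a) = 0) ->
  p e = p e' -> f e = f e'.
Proof.
case=> _ _ hker hp hf fj0 he; apply/eqP; rewrite -subr_eq0 -(linB _ _ hf).
have /hker [a ->] : p (e - e') = 0 by rewrite (linB _ _ hp) he subrr.
by rewrite fj0.
Qed.

End Basics.

Lemma lift2 (X Y : Type) (A : choiceType) (B : eqType) (j : A -> B)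
    (f : X -> Y -> B) :
  (forall x y, exists a, f x y = j a) ->
  exists r : X -> Y -> A, forall x y, j (r x y) = f x y.
Proof.
move=> hf; have hex x y : exists a, j a == f x y.
  by have [a ->] := hf x y; exists a.
by exists (fun x y => xchoose (hex x y)) => x y; apply/eqP/(xchooseP (hex x y)).
Qed.

Section TwoExtension.
Variables (K : fieldType) (G H W V E1 E0 : lmodType K).
Variables (brg : G -> G -> G) (brh : H -> H -> H) (mu : G -> H).
Variables (L : H -> G -> G) (phi : W -> V).
Variables (bre1 : E1 -> E1 -> E1) (bre0 : E0 -> E0 -> E0) (eps : E1 -> E0).
Variable Le : E0 -> E1 -> E1.
Variables (j1 : W -> E1) (j0 : V -> E0) (pi1 : E1 -> G) (pi0 : E0 -> H).

Hypothesis gh_cm : is_crossed_module brg brh mu L.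
Hypothesis e_cm : is_crossed_module bre1 bre0 eps Le.
Hypothesis j_mor :
  cm_morphism (@abr K W) (@abr K V) phi (@zact K V W) bre1 bre0 eps Le j1 j0.
Hypothesis pi_mor : cm_morphism bre1 bre0 eps Le brg brh mu L pi1 pi0.
Hypothesis j1_pi1 : short_exact j1 pi1.
Hypothesis j0_pi0 : short_exact j0 pi0.

Let brh_lie : is_lie brh. Proof. by case: gh_cm. Qed.
Let L_lin2 : lin2 L. Proof. by case: gh_cm => _ _ _ [[]]. Qed.

Let bre1_lie : is_lie bre1. Proof. by case: e_cm. Qed.
Let bre0_lie : is_lie bre0. Proof. by case: e_cm. Qed.
Let eps_lin : lin eps. Proof. by case: e_cm => _ _ []. Qed.
Let Le_lin2 : lin2 Le. Proof. by case: e_cm => _ _ _ [[]]. Qed.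
Let Le_der a e e' : Le a (bre1 e e') = bre1 (Le a e) e' + bre1 e (Le a e').
Proof. by case: e_cm => _ _ _ [[_ []]]. Qed.
Let Le_hom a b e : Le (bre0 a b) e = Le a (Le b e) - Le b (Le a e).
Proof. by case: e_cm => _ _ _ [[_ []]]. Qed.
Let eps_Le a e : eps (Le a e) = bre0 a (eps e).
Proof. by case: e_cm => _ _ _ []. Qed.
Let Le_eps e e' : Le (eps e) e' = bre1 e e'.
Proof. by case: e_cm => _ _ _ []. Qed.

Let j1_lin : lin j1. Proof. by case: j_mor => [[]]. Qed.
Let j0_lin : lin j0. Proof. by case: j_mor => _ []. Qed.
Let j1_inj : injective j1. Proof. by case: j1_pi1. Qed.
Let j0_inj : injective j0. Proof. by case: j0_pi0. Qed.

Let pi1_lin : lin pi1. Proof. by case: pi_mor => [[]]. Qed.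
Let pi0_lin : lin pi0. Proof. by case: pi_mor => _ []. Qed.
Let pi1_hom e e' : pi1 (bre1 e e') = brg (pi1 e) (pi1 e').
Proof. by case: pi_mor => [[]]. Qed.
Let pi0_hom a b : pi0 (bre0 a b) = brh (pi0 a) (pi0 b).
Proof. by case: pi_mor => _ []. Qed.
Let mu_pi1 e : mu (pi1 e) = pi0 (eps e). Proof. by case: pi_mor. Qed.
Let pi1_Le a e : pi1 (Le a e) = L (pi0 a) (pi1 e). Proof. by case: pi_mor. Qed.

Lemma bre0_j0 v v' : bre0 (j0 v) (j0 v') = 0.
Proof. by case: j_mor => _ [_ <-] _ _; rewrite /abr lin0. Qed.

Lemma Le_j0_j1 v w : Le (j0 v) (j1 w) = 0.
Proof. by case: j_mor => _ _ _ <-; rewrite /zact lin0. Qed.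

Lemma eps_j1 w : eps (j1 w) = j0 (phi w).
Proof. by case: j_mor. Qed.

Lemma bre0_j0_pi0 a b v : pi0 a = pi0 b -> bre0 a (j0 v) = bre0 b (j0 v).
Proof.
apply: (short_exact_fiber (f := bre0^~ (j0 v)) j0_pi0) => // [|v'].
  exact: lin2l bre0_lie.1.
exact: bre0_j0.
Qed.

Lemma Le_j1_pi0 a b w : pi0 a = pi0 b -> Le a (j1 w) = Le b (j1 w).
Proof.
apply: (short_exact_fiber (f := Le^~ (j1 w)) j0_pi0) => // [|v].
  exact: lin2l Le_lin2.
exact: Le_j0_j1.
Qed.

Lemma Le_j0_pi1 e e' v : pi1 e = pi1 e' -> Le (j0 v) e = Le (j0 v) e'.
Proof.
apply: (short_exact_fiber (f := Le (j0 v)) j1_pi1) => // [|w].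
  exact: Le_lin2.1.
exact: Le_j0_j1.
Qed.

Lemma bre0_j0_in_V a v : exists v', bre0 a (j0 v) = j0 v'.
Proof.
apply: (short_exact_ker j0_pi0).
by rewrite pi0_hom (short_exact_comp _ j0_pi0) (lin0 (brh_lie.1.1 _)).
Qed.

Lemma Le_j1_in_W a w : exists w', Le a (j1 w) = j1 w'.
Proof.
apply: (short_exact_ker j1_pi1).
by rewrite pi1_Le (short_exact_comp _ j1_pi1) (lin0 (L_lin2.1 _)).
Qed.

Lemma Le_j0_in_W v e : exists w, - Le (j0 v) e = j1 w.
Proof.
apply: (short_exact_ker j1_pi1).
rewrite (linN _ pi1_lin) pi1_Le (short_exact_comp _ j0_pi0).
by rewrite (lin0 (lin2l _ L_lin2)) oppr0.
Qed.

Variables (s0 : H -> E0) (s1 : G -> E1).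
Hypotheses (s0_lin : lin s0) (s1_lin : lin s1).
Hypotheses (s0K : cancel s0 pi0) (s1K : cancel s1 pi1).

Lemma pi0_s0_bracket y1 y2 : pi0 (s0 (brh y1 y2)) = pi0 (bre0 (s0 y1) (s0 y2)).
Proof. by rewrite pi0_hom !s0K. Qed.

Lemma pi0_s0_mu x : pi0 (s0 (mu x)) = pi0 (eps (s1 x)).
Proof. by rewrite -mu_pi1 !s1K s0K. Qed.

Lemma pi1_s1_bracket x1 x2 : pi1 (s1 (brg x1 x2)) = pi1 (bre1 (s1 x1) (s1 x2)).
Proof. by rewrite pi1_hom !s1K. Qed.

Lemma pi1_s1_act y x : pi1 (s1 (L y x)) = pi1 (Le (s0 y) (s1 x)).
Proof. by rewrite pi1_Le s0K !s1K. Qed.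

Variables (rho01 : H -> W -> W) (rho00 : H -> V -> V) (rho1 : G -> V -> W).
Hypothesis j0_rho00 : forall y v, j0 (rho00 y v) = bre0 (s0 y) (j0 v).
Hypothesis j1_rho01 : forall y w, j1 (rho01 y w) = Le (s0 y) (j1 w).
Hypothesis j1_rho1 : forall x v, j1 (rho1 x v) = - Le (j0 v) (s1 x).

Lemma rho01_lin2 : lin2 rho01.
Proof.
split=> [y a w w' | a y y' w]; apply: j1_inj; rewrite j1_lin !j1_rho01.
  by rewrite j1_lin Le_lin2.1.
by rewrite s0_lin Le_lin2.2.
Qed.

Lemma rho01_hom y1 y2 w :
  rho01 (brh y1 y2) w = rho01 y1 (rho01 y2 w) - rho01 y2 (rho01 y1 w).
Proof.
apply: j1_inj; rewrite (linB _ _ j1_lin) !j1_rho01.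
by rewrite (Le_j1_pi0 _ (pi0_s0_bracket y1 y2)) Le_hom.
Qed.

Lemma rho00_lin2 : lin2 rho00.
Proof.
split=> [y a v v' | a y y' v]; apply: j0_inj; rewrite j0_lin !j0_rho00.
  by rewrite j0_lin bre0_lie.1.1.
by rewrite s0_lin bre0_lie.1.2.
Qed.

Lemma rho00_hom y1 y2 v :
  rho00 (brh y1 y2) v = rho00 y1 (rho00 y2 v) - rho00 y2 (rho00 y1 v).
Proof.
apply: j0_inj; rewrite (linB _ _ j0_lin) !j0_rho00.
by rewrite (bre0_j0_pi0 _ (pi0_s0_bracket y1 y2)) lie_jacobi.
Qed.

Lemma rho1_lin2 : lin2 rho1.
Proof.
split=> [x a v v' | a x x' v]; apply: j1_inj; rewrite j1_lin !j1_rho1.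
  by rewrite j0_lin Le_lin2.2 opprD scalerN.
by rewrite s1_lin Le_lin2.1 opprD scalerN.
Qed.

Lemma phi_rho01 y w : phi (rho01 y w) = rho00 y (phi w).
Proof. by apply: j0_inj; rewrite j0_rho00 -!eps_j1 j1_rho01 eps_Le. Qed.

Lemma rho1_bracket x1 x2 v :
  rho1 (brg x1 x2) v = rho1 x1 (phi (rho1 x2 v)) - rho1 x2 (phi (rho1 x1 v)).
Proof.
apply: j1_inj; rewrite (linB _ _ j1_lin) !j1_rho1 -!eps_j1 !j1_rho1 !Le_eps.
rewrite (Le_j0_pi1 _ (pi1_s1_bracket x1 x2)) Le_der.
rewrite !(linN _ (lin2l _ bre1_lie.1)) /= !opprK.
by rewrite (lie_anti (Le _ _) (s1 x1)) // opprD addrC.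
Qed.

Lemma rho00_mu x v : rho00 (mu x) v = phi (rho1 x v).
Proof.
apply: j0_inj; rewrite j0_rho00 -eps_j1 j1_rho1 (linN _ eps_lin) eps_Le.
by rewrite (bre0_j0_pi0 _ (pi0_s0_mu x)) lie_anti.
Qed.

Lemma rho01_mu x w : rho01 (mu x) w = rho1 x (phi w).
Proof.
apply: j1_inj; rewrite j1_rho01 j1_rho1 -eps_j1.
by rewrite (Le_j1_pi0 _ (pi0_s0_mu x)) !Le_eps lie_anti.
Qed.

Lemma rho1_act y x v :
  rho1 (L y x) v = rho01 y (rho1 x v) - rho1 x (rho00 y v).
Proof.
apply: j1_inj; rewrite (linB _ _ j1_lin) j1_rho01 !j1_rho1 j0_rho00.
rewrite (Le_j0_pi1 _ (pi1_s1_act y x)) Le_hom (linN _ (Le_lin2.1 _)).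
by rewrite opprK addKr.
Qed.

Lemma two_representation_of_lifts :
  two_representation brg brh mu L phi rho01 rho00 rho1.
Proof.
exact: And5 (conj rho01_lin2 rho01_hom) (conj rho00_lin2 rho00_hom) rho1_lin2
  phi_rho01 (And4 rho1_bracket rho00_mu rho01_mu rho1_act).
Qed.

End TwoExtension.

Theorem mainTheorem5 (K : fieldType) (G H W V E1 E0 : lmodType K)
  (brg : G -> G -> G) (brh : H -> H -> H) (mu : G -> H) (L : H -> G -> G)
  (phi : W -> V)
  (bre1 : E1 -> E1 -> E1) (bre0 : E0 -> E0 -> E0) (eps : E1 -> E0)
  (Le : E0 -> E1 -> E1)
  (j1 : W -> E1) (j0 : V -> E0) (pi1 : E1 -> G) (pi0 : E0 -> H)
  (sigma0 : H -> E0) (sigma1 : G -> E1) :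
  is_crossed_module brg brh mu L ->
  two_extension brg brh mu L phi bre1 bre0 eps Le j1 j0 pi1 pi0 ->
  lin sigma0 -> lin sigma1 ->
  (forall y, pi0 (sigma0 y) = y) -> (forall x, pi1 (sigma1 x) = x) ->
  exists (rho01 : H -> W -> W) (rho00 : H -> V -> V) (rho1 : G -> V -> W),
    [/\ (forall y v, j0 (rho00 y v) = bre0 (sigma0 y) (j0 v)),
        (forall y w, j1 (rho01 y w) = Le (sigma0 y) (j1 w)),
        (forall x v, j1 (rho1 x v) = - Le (j0 v) (sigma1 x)) &
        two_representation brg brh mu L phi rho01 rho00 rho1].
Proof.
move=> gh_cm [_ e_cm [j_mor pi_mor j1_pi1 j0_pi0]] s0_lin s1_lin s0K s1K.
have [rho00 j0_rho00] := lift2 (fun y v =>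
  bre0_j0_in_V gh_cm pi_mor j0_pi0 (sigma0 y) v).
have [rho01 j1_rho01] := lift2 (fun y w =>
  Le_j1_in_W gh_cm pi_mor j1_pi1 (sigma0 y) w).
have [rho1 j1_rho1] := lift2 (fun x v =>
  Le_j0_in_W gh_cm pi_mor j1_pi1 j0_pi0 v (sigma1 x)).
exists rho01, rho00, rho1; split=> //.
exact: (two_representation_of_lifts e_cm j_mor pi_mor j1_pi1 j0_pi0
  s0_lin s1_lin s0K s1K j0_rho00 j1_rho01 j1_rho1).
Qed.
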